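(* Let $k\ge 3$ and let $\mathfrak V$ be the subvariety of $\mathfrak B$ defined by the identity of right nilpotency $(\cdots((x_1x_2)x_3)\cdots)x_k=0$. Then for every $n\ge 2k-4$ the codimension satisfies $c_n(\mathfrak V)\ge d_{(n-k+2,k-2)}$, the degree of the irreducible $S_n$-character $\chi_{(n-k+2,k-2)}$; in particular $c_n(\mathfrak V)$ is bounded below by a polynomial in $n$ of degree $k-2$.
   Context: $K$ is a field of characteristic $0$. $\mathfrak B$ is the variety of bicommutative algebras, defined by the identities $(x_1x_2)x_3=(x_1x_3)x_2$ and $x_1(x_2x_3)=x_2(x_1x_3)$. For a variety $\mathfrak V$, $c_n(\mathfrak V)$ is the dimension of the space of multilinear elements of degree $n$ in $x_1,\dots,x_n$ in the relatively free algebra of $\mathfrak V$. $\chi_\lambda$ denotes the irreducible $S_n$-character indexed by the partition $\lambda\vdash n$ and $d_\lambda$ its degree. *)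

From HB Require Import structures.
From mathcomp Require Import all_boot all_order all_algebra.
Set Implicit Arguments. Unset Strict Implicit. Unset Printing Implicit Defensive.
Import GRing.Theory.

(* Nonassociative monomials: binary trees whose leaves are variables x_i   *)
(* (Leaf i stands for x_i, variables indexed from 0).                      *)
Inductive tree : Type := Leaf of nat | Node of tree & tree.

Fixpoint tree_eqb (t u : tree) : bool :=
  match t, u with
  | Leaf n, Leaf m => n == m
  | Node a b, Node c d => tree_eqb a c && tree_eqb b d
  | _, _ => false
  end.

Lemma tree_eqP : Equality.axiom tree_eqb.
Proof.
elim=> [n|a IHa b IHb] [m|c d] /=; try by constructor.
- by apply: (iffP eqP) => [->|[]].
- by case: IHa => [->|Hac]; case: IHb => [->|Hbd]; constructor => // -[].
Qed.

HB.instance Definition _ := hasDecEq.Build tree tree_eqP.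

Inductive ctx : Type := Hole | CL of ctx & tree | CR of tree & ctx.

Fixpoint plug (u : ctx) (t : tree) : tree :=
  match u with
  | Hole => t
  | CL c s => Node (plug c t) s
  | CR s c => Node s (plug c t)
  end.

Fixpoint subst (ms : seq tree) (t : tree) : tree :=
  match t with
  | Leaf i => nth (Leaf 0) ms i
  | Node a b => Node (subst ms a) (subst ms b)
  end.

Fixpoint trees_fuel (fuel : nat) (s : seq nat) : seq tree :=
  match fuel with
  | 0 => [::]
  | f.+1 =>
    match s with
    | [::] => [::]
    | [:: x] => [:: Leaf x]
    | _ => flatten [seq [seq Node a b | a <- trees_fuel f (take i s),
                                        b <- trees_fuel f (drop i s)]
                   | i <- iota 1 (size s).-1]
    end
  end.
Definition trees_on (s : seq nat) : seq tree := trees_fuel (size s) s.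

Fixpoint ctx_fuel (fuel : nat) (s : seq nat) : seq ctx :=
  match fuel with
  | 0 => [::]
  | f.+1 =>
    if s is [::] then [:: Hole] else
    flatten [seq [seq CL c t | c <- ctx_fuel f (take i s),
                               t <- trees_on (drop i s)]
            | i <- iota 0 (size s)]
    ++ flatten [seq [seq CR t c | t <- trees_on (take j s),
                                  c <- ctx_fuel f (drop j s)]
               | j <- iota 1 (size s)]
  end.
Definition ctx_on (s : seq nat) : seq ctx := ctx_fuel (size s).+1 s.

Fixpoint comps (m r : nat) : seq (seq nat) :=
  match r with
  | 0 => if m == 0 then [:: [::]] else [::]
  | r'.+1 => flatten [seq [seq i :: c | c <- comps (m - i) r'] | i <- iota 1 m]
  end.

Definition choose_trees (bs : seq (seq nat)) : seq (seq tree) :=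
  foldr (fun b acc => [seq t :: ts | t <- trees_on b, ts <- acc]) [:: [::]] bs.

(* The multilinear monomials of degree n in x_0, ..., x_(n-1): a basis of P_n *)
Definition mono (n : nat) : seq tree :=
  undup (flatten [seq trees_on p | p <- permutations (iota 0 n)]).

(* Nonassociative polynomials with integer coefficients (formal sums). *)
Definition ipoly := seq (int * tree).

Section Vec.
Variable K : fieldType.

(* coordinates of a monomial in P_n = K^(mono n) *)
Definition vecM (n : nat) (t : tree) : 'rV[K]_(size (mono n)) :=
  \row_(j < size (mono n)) ((nth (Leaf 0) (mono n) j == t)%:R)%R.

Definition polyvec (n : nat) (p : ipoly) : 'rV[K]_(size (mono n)) :=
  (\sum_(x <- p) (x.1)%:~R *: vecM n x.2)%R.

Definition apply_id (u : ctx) (ms : seq tree) (f : ipoly) : ipoly :=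
  [seq (x.1, plug u (subst ms x.2)) | x <- f].

(* all multilinear consequences of degree n of the multilinear identity f
   in r variables: u[f(m_1,...,m_r)], the variables of u, m_1, ..., m_r
   partitioning {x_0, ..., x_(n-1)}.  They span P_n \cap T-ideal(f). *)
Definition gens_of (n : nat) (f : ipoly) (r : nat) : seq 'rV[K]_(size (mono n)) :=
  flatten [seq
   flatten [seq
    flatten [seq
     flatten [seq [seq polyvec n (apply_id u ms f)
                  | ms <- choose_trees (reshape sz (drop c0 p))]
             | u <- ctx_on (take c0 p)]
    | sz <- comps (n - c0) r]
   | c0 <- iota 0 n.+1]
  | p <- permutations (iota 0 n)].
End Vec.

Definition idB1 : ipoly :=
  [:: (1%Z, Node (Node (Leaf 0) (Leaf 1)) (Leaf 2));
      ((-1)%Z, Node (Node (Leaf 0) (Leaf 2)) (Leaf 1))].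
Definition idB2 : ipoly :=
  [:: (1%Z, Node (Leaf 0) (Node (Leaf 1) (Leaf 2)));
      ((-1)%Z, Node (Leaf 1) (Node (Leaf 0) (Leaf 2)))].
Definition left_normed (k : nat) : tree :=
  foldl (fun t i => Node t (Leaf i)) (Leaf 0) (iota 1 k.-1).
Definition idRN (k : nat) : ipoly := [:: (1%Z, left_normed k)].

Definition idents (k : nat) : seq (ipoly * nat) :=
  [:: (idB1, 3); (idB2, 3); (idRN k, k)].

Definition TV (K : fieldType) (k n : nat) : {vspace 'rV[K]_(size (mono n))} :=
  << flatten [seq gens_of K n f.1 f.2 | f <- idents k] >>%VS.

Definition codim (K : fieldType) (k n : nat) : nat :=
  size (mono n) - \dim (TV K k n).

(* Degree d_lambda of the irreducible S_n-character chi_lambda, via the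
   hook length formula; lambda is given as a weakly decreasing seq of parts. *)
Definition hook_prod (la : seq nat) : nat :=
  \prod_(i < size la) \prod_(j < nth 0 la i)
     ((nth 0 la i - j) + (count (fun x => j < x) la - i) - 1).
Definition dim_irr (la : seq nat) : nat := (sumn la)`! %/ hook_prod la.

From mathcomp Require Import all_boot all_order all_algebra.
From mathcomp Require Import zify.
Set Implicit Arguments. Unset Strict Implicit. Unset Printing Implicit Defensive.
Import GRing.Theory.

(* A multilinear monomial is evaluated in a bicommutative magma that remembers,
   for a product, the multiset of variables standing as left children and the
   multiset of those standing as right children.  Both defining identities of
   the variety hold in this magma, and every consequence of the right
   nilpotency identity of index k has at least k - 1 variables as right
   children.  So for a value tau with fewer right children, the sum of the
   coefficients of the monomials of value tau is a linear form vanishing on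
   P_n /\ T(V).  For each (k - 2)-subset A of the variables some multilinear
   monomial has exactly A as its right children; these monomials and the
   linear forms of their values are dual families, whence c_n(V) >= C(n, k - 2),
   and the hook length formula gives C(n, k - 2) >= d_(n - k + 2, k - 2). *)

Fixpoint leaves (t : tree) : seq nat :=
  match t with Leaf i => [:: i] | Node a b => leaves a ++ leaves b end.

Lemma size_leaves_gt0 t : 0 < size (leaves t).
Proof. by elim: t => //= a IHa b _; rewrite size_cat ltn_addr. Qed.

Lemma trees_fuelS f s : 1 < size s ->
  trees_fuel f.+1 s = flatten [seq [seq Node a b | a <- trees_fuel f (take i s),
                                                  b <- trees_fuel f (drop i s)]
                              | i <- iota 1 (size s).-1].
Proof. by case: s => [|x [|y s]]. Qed.

Lemma leaves_trees_fuel f s t : t \in trees_fuel f s -> leaves t = s.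
Proof.
elim: f s t => [//|f IH] s t.
case: (ltnP 1 (size s)) => [s_gt1|]; last first.
  by case: s => [|x [|y s]] //= _; rewrite inE => /eqP ->.
rewrite trees_fuelS // => /flatten_mapP [i _ /allpairsP [[a b] /= [Ha Hb ->]]] /=.
by rewrite (IH _ _ Ha) (IH _ _ Hb) cat_take_drop.
Qed.

Lemma mem_trees_fuel t f : size (leaves t) <= f -> t \in trees_fuel f (leaves t).
Proof.
elim: t f => [i [|f] //= _|a IHa b IHb f]; first by rewrite inE.
have := size_leaves_gt0 a; have := size_leaves_gt0 b.
rewrite /= size_cat => b_gt0 a_gt0 ab_le.
case: f ab_le => [|f] ab_le; first lia.
change (Node a b \in trees_fuel f.+1 (leaves a ++ leaves b)).
rewrite trees_fuelS ?size_cat; last lia.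
apply/flatten_mapP; exists (size (leaves a)).
  by rewrite mem_iota; lia.
apply/allpairsP; exists (a, b); rewrite take_size_cat ?drop_size_cat //.
by split => //; [apply: IHa | apply: IHb]; lia.
Qed.

Lemma mem_mono n t : (t \in mono n) = perm_eq (leaves t) (iota 0 n).
Proof.
rewrite mem_undup; apply/flatten_mapP/idP => [[p]|perm_t].
  by rewrite mem_permutations => p_perm /leaves_trees_fuel ->.
by exists (leaves t); rewrite ?mem_permutations //; apply: mem_trees_fuel.
Qed.

Lemma perm_leaves_plug u s s' : perm_eq (leaves s) (leaves s') ->
  perm_eq (leaves (plug u s)) (leaves (plug u s')).
Proof. by elim: u => //= [c IH t | t c IH] /IH; rewrite ?perm_cat2r ?perm_cat2l. Qed.

Lemma mem_mono_perm n t t' : perm_eq (leaves t) (leaves t') ->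
  (t \in mono n) = (t' \in mono n).
Proof. by move=> perm_tt'; rewrite !mem_mono (permPl perm_tt'). Qed.

(* [inl i] is the variable x_i and [inr (L, R)] a product whose left and right
   children that are variables form the sorted multisets L and R. *)
Definition bmag := (nat + seq nat * seq nat)%type.

Definition msum (a b : seq nat) := sort leq (a ++ b).

Definition as_left (v : bmag) : seq nat * seq nat :=
  match v with inl i => ([:: i], [::]) | inr p => p end.
Definition as_right (v : bmag) : seq nat * seq nat :=
  match v with inl i => ([::], [:: i]) | inr p => p end.

Definition bmul (u v : bmag) : bmag :=
  inr (msum (as_left u).1 (as_right v).1, msum (as_left u).2 (as_right v).2).

Fixpoint bval (t : tree) : bmag :=
  match t with Leaf i => inl i | Node a b => bmul (bval a) (bval b) end.

Fixpoint bval_ctx (u : ctx) (v : bmag) : bmag :=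
  match u with
  | Hole => v
  | CL c t => bmul (bval_ctx c v) (bval t)
  | CR t c => bmul (bval t) (bval_ctx c v)
  end.

Fixpoint beval (env : nat -> bmag) (t : tree) : bmag :=
  match t with Leaf i => env i | Node a b => bmul (beval env a) (beval env b) end.

Lemma perm_msum a b : perm_eq (msum a b) (a ++ b).
Proof. by rewrite /msum perm_sort. Qed.

Lemma size_msum a b : size (msum a b) = size a + size b.
Proof. by rewrite (perm_size (perm_msum a b)) size_cat. Qed.

Lemma msum_perm_eq a b c d : perm_eq (a ++ b) (c ++ d) -> msum a b = msum c d.
Proof. by apply/perm_sortP; [apply: leq_total | apply: leq_trans | apply: anti_leq]. Qed.

Lemma msumAC a b c : msum (msum a b) c = msum (msum a c) b.
Proof.
apply: msum_perm_eq.
rewrite (permPl (perm_cat (perm_msum a b) (perm_refl c))).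
rewrite (permPr (perm_cat (perm_msum a c) (perm_refl b))).
by rewrite -!catA perm_cat2l perm_catC.
Qed.

Lemma msumCA a b c : msum a (msum b c) = msum b (msum a c).
Proof.
apply: msum_perm_eq.
rewrite (permPl (perm_cat (perm_refl a) (perm_msum b c))).
rewrite (permPr (perm_cat (perm_refl b) (perm_msum a c))).
by rewrite !catA perm_cat2r perm_catC.
Qed.

Lemma bmulAC u v w : bmul (bmul u v) w = bmul (bmul u w) v.
Proof. by rewrite /bmul /= msumAC [msum (msum _ _) (as_right v).2]msumAC. Qed.

Lemma bmulCA u v w : bmul u (bmul v w) = bmul v (bmul u w).
Proof. by rewrite /bmul /= msumCA [msum _ (msum _ (as_right w).2)]msumCA. Qed.

Lemma bval_plug u s : bval (plug u s) = bval_ctx u (bval s).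
Proof. by elim: u => //= [c -> t | t c ->]. Qed.

Lemma bval_subst ms t :
  bval (subst ms t) = beval (fun i => bval (nth (Leaf 0) ms i)) t.
Proof. by elim: t => //= a -> b ->. Qed.

Definition rleaves (v : bmag) : seq nat := (as_left v).2.

Lemma size_rleaves_bmul u v :
  size (rleaves (bmul u v)) = size (rleaves u) + size (as_right v).2.
Proof. exact: size_msum. Qed.

Lemma perm_rleaves_bmul u v : perm_eq (rleaves (bmul u v)) (rleaves u ++ (as_right v).2).
Proof. exact: perm_msum. Qed.

Lemma size_as_right_bval_gt0 t : 0 < size (as_right (bval t)).2.
Proof. by elim: t => //= a _ b IHb; rewrite size_msum addn_gt0 IHb orbT. Qed.

Definition rcomb (w : tree) (Rs : seq nat) : tree :=
  foldl (fun w b => Node w (Leaf b)) w Rs.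
Definition lcomb (Ls : seq nat) (w : tree) : tree :=
  foldr (fun a w => Node (Leaf a) w) w Ls.

Lemma size_rleaves_le v : size (rleaves v) <= size (as_right v).2.
Proof. by case: v. Qed.

Lemma size_rleaves_bval_ctx u v : size (rleaves v) <= size (rleaves (bval_ctx u v)).
Proof.
elim: u => //= [c IH t | t c IH]; rewrite size_rleaves_bmul.
  exact: leq_trans IH (leq_addr _ _).
exact: leq_trans IH (leq_trans (size_rleaves_le _) (leq_addl _ _)).
Qed.

Lemma size_rleaves_rcomb env t0 Rs : (forall i, 0 < size (as_right (env i)).2) ->
  size Rs + size (rleaves (beval env t0)) <= size (rleaves (beval env (rcomb t0 Rs))).
Proof.
move=> env_gt0; elim: Rs t0 => //= i Rs IH t0.
apply: leq_trans (IH _); rewrite /= size_rleaves_bmul.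
by have := env_gt0 i; lia.
Qed.

Lemma size_rleaves_left_normed k u ms :
  k.-1 <= size (rleaves (bval (plug u (subst ms (left_normed k))))).
Proof.
rewrite bval_plug; apply: leq_trans (size_rleaves_bval_ctx _ _).
rewrite bval_subst; apply: leq_trans (size_rleaves_rcomb _ _ _) => [|i].
  by rewrite size_iota leq_addr.
exact: size_as_right_bval_gt0.
Qed.

Definition split_tree (L R : seq nat) : tree :=
  if (L, R) is (l :: Ls, r :: Rs) then rcomb (lcomb Ls (Node (Leaf l) (Leaf r))) Rs
  else Leaf 0.

Lemma leaves_rcomb w Rs : leaves (rcomb w Rs) = leaves w ++ Rs.
Proof. by elim: Rs w => [|b Rs IH] w /=; rewrite ?cats0 // IH -catA. Qed.

Lemma leaves_lcomb Ls w : leaves (lcomb Ls w) = Ls ++ leaves w.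
Proof. by elim: Ls => //= a Ls ->. Qed.

Lemma perm_rleaves_rcomb w Rs :
  perm_eq (rleaves (bval (rcomb w Rs))) (rleaves (bval w) ++ Rs).
Proof.
elim: Rs w => [|b Rs IH] w /=; first by rewrite cats0.
by rewrite (permPl (IH _)) -cat1s catA perm_cat2r perm_rleaves_bmul.
Qed.

Lemma perm_rleaves_lcomb Ls a b :
  perm_eq (rleaves (bval (lcomb Ls (Node a b)))) (rleaves (bval (Node a b))).
Proof.
elim: Ls => //= x Ls; rewrite (permPl (perm_rleaves_bmul _ _)).
by case: Ls.
Qed.

Lemma split_tree_spec l Ls r Rs :
  perm_eq (leaves (split_tree (l :: Ls) (r :: Rs))) ((l :: Ls) ++ r :: Rs) /\
  perm_eq (rleaves (bval (split_tree (l :: Ls) (r :: Rs)))) (r :: Rs).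
Proof.
split; first by rewrite /= leaves_rcomb leaves_lcomb -catA perm_sym -cat1s perm_catCA.
rewrite (permPl (perm_rleaves_rcomb _ _)) -cat1s perm_cat2r.
by rewrite (permPl (perm_rleaves_lcomb _ _ _)); apply: perm_msum.
Qed.

Section SetTree.
Variable n : nat.

Definition seq_of_set (A : {set 'I_n}) : seq nat := [seq val i | i <- enum A].

Definition set_tree (A : {set 'I_n}) : tree :=
  split_tree (seq_of_set (~: A)) (seq_of_set A).

Lemma size_seq_of_set A : size (seq_of_set A) = #|A|.
Proof. by rewrite size_map -cardE. Qed.

Lemma mem_seq_of_set A (i : 'I_n) : (val i \in seq_of_set A) = (i \in A).
Proof. by rewrite (mem_map val_inj) mem_enum. Qed.

Lemma perm_seq_of_setC A : perm_eq (seq_of_set (~: A) ++ seq_of_set A) (iota 0 n).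
Proof.
rewrite -val_enum_ord -map_cat; apply/perm_map/uniq_perm; rewrite ?enum_uniq //.
  by rewrite cat_uniq !enum_uniq andbT /=; apply/hasPn => i; rewrite !mem_enum inE negbK.
by move=> i; rewrite mem_cat !mem_enum inE orNb.
Qed.

Lemma set_tree_spec (A : {set 'I_n}) : 0 < #|A| < n ->
  set_tree A \in mono n /\ perm_eq (rleaves (bval (set_tree A))) (seq_of_set A).
Proof.
move=> /andP [A_gt0 A_ltn].
have : 0 < size (seq_of_set (~: A)).
  by rewrite size_seq_of_set; have := cardsC A; rewrite card_ord; lia.
have : 0 < size (seq_of_set A) by rewrite size_seq_of_set.
rewrite /set_tree mem_mono -(permPr (perm_seq_of_setC A)).
case: (seq_of_set (~: A)) => [|l Ls]; case: (seq_of_set A) => [|r Rs] //= _ _.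
exact: split_tree_spec.
Qed.

Lemma bval_set_tree_inj (A B : {set 'I_n}) : 0 < #|A| < n -> 0 < #|B| < n ->
  bval (set_tree A) = bval (set_tree B) -> A = B.
Proof.
move=> /set_tree_spec [_ permA] /set_tree_spec [_ permB] eq_val.
have permAB : perm_eq (seq_of_set A) (seq_of_set B).
  by rewrite -(permPl permA) -(permPr permB) eq_val.
by apply/setP => i; rewrite -!mem_seq_of_set (perm_mem permAB).
Qed.

End SetTree.

Section DualBasis.
Variables (K : fieldType) (N m : nat).
Local Open Scope ring_scope.

Lemma dim_span_add_biorthogonal_le (X : seq 'rV[K]_N)
    (x : 'I_m -> 'rV[K]_N) (c : 'I_m -> 'cV[K]_N) :
  (forall i, {in X, forall u, u *m c i = 0}) ->
  (forall i j, x j *m c i = (i == j)%:R%:M) ->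
  (\dim <<X>> + m <= N)%N.
Proof.
move=> cX xc.
pose C : 'M[K]_(N, m) := \matrix_(r, i) c i r 0.
have mulC u i : (u *m C) 0 i = (u *m c i) 0 0.
  by rewrite !mxE; apply: eq_bigr => r _; rewrite mxE.
pose F : 'Hom('rV[K]_N, 'rV[K]_m) := linfun (mulmxr C).
have kerF : (<<X>> <= lker F)%VS.
  apply/span_subvP => u Xu; rewrite memv_ker lfunE /=; apply/eqP/rowP => i.
  by rewrite mulC cX // !mxE.
have imgF : limg F = fullv.
  apply/eqP; rewrite eqEsubv subvf /=; apply/subvP => w _.
  suff -> : w = F (\sum_j w 0 j *: x j) by apply: memv_img; apply: memvf.
  rewrite linear_sum {1}(row_sum_delta w); apply: eq_bigr => j _.
  rewrite linearZ /= /F lfunE /=; congr (_ *: _); apply/rowP => i.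
  by rewrite mulC xc !mxE eq_sym.
have := limg_ker_dim F fullv.
rewrite capfv imgF !dimvf /dim /= !mul1n => dimF.
by apply: leq_trans (eq_leq dimF); rewrite leq_add2r dimvS.
Qed.

End DualBasis.

Lemma sum_indicator_uniq (R : pzSemiRingType) (T : eqType) (s : seq T) t (F : T -> R) :
  uniq s -> (\sum_(x <- s) (x == t)%:R * F x = (t \in s)%:R * F t)%R.
Proof.
elim: s => [|x s IH] /=; first by rewrite big_nil mul0r.
case/andP => x_notin_s /IH; rewrite big_cons inE => ->.
have [<-|_] := eqVneq x t; first by rewrite (negPf x_notin_s) mul0r addr0.
by rewrite mul0r add0r.
Qed.

(* [ctx] has no [eqType] structure, so [mapP] and [flatten_mapP] do not apply. *)
Lemma mem_flatten_map_ex (S : Type) (T : eqType) (A : S -> seq T) s y :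
  y \in flatten (map A s) -> exists x, y \in A x.
Proof. by elim: s => //= x s IH; rewrite mem_cat => /orP [|/IH //]; exists x. Qed.

Lemma mem_map_ex (S : Type) (T : eqType) (f : S -> T) s y :
  y \in map f s -> exists x, y = f x.
Proof. by elim: s => //= x s IH; rewrite inE => /orP [/eqP ->|/IH //]; exists x. Qed.

Section ClassFunctional.
Variables (K : fieldType) (n : nat).
Local Open Scope ring_scope.

Definition class_col (tau : bmag) : 'cV[K]_(size (mono n)) :=
  \col_j (bval (nth (Leaf 0) (mono n) j) == tau)%:R.

Lemma vecM_class_col t tau :
  (vecM K n t *m class_col tau) 0 0 = ((t \in mono n) && (bval t == tau))%:R.
Proof.
rewrite mxE; under eq_bigr => j _ do rewrite !mxE.
rewrite -(big_mkord xpredT (fun j => (nth (Leaf 0) (mono n) j == t)%:R *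
                                     (bval (nth (Leaf 0) (mono n) j) == tau)%:R)).
rewrite -(big_nth (Leaf 0) xpredT (fun s => (s == t)%:R * (bval s == tau)%:R)).
by rewrite sum_indicator_uniq ?undup_uniq // -natrM mulnb.
Qed.

Lemma polyvec_class_col p tau :
  (polyvec K n p *m class_col tau) 0 0 =
  \sum_(x <- p) x.1%:~R * ((x.2 \in mono n) && (bval x.2 == tau))%:R.
Proof.
rewrite /polyvec mulmx_suml summxE; apply: eq_bigr => x _.
by rewrite -scalemxAl mxE vecM_class_col.
Qed.

Lemma polyvec_sub_class_col (s s' : tree) tau :
  perm_eq (leaves s) (leaves s') -> bval s = bval s' ->
  polyvec K n [:: (1%Z, s); ((-1)%Z, s')] *m class_col tau = 0.
Proof.
move=> perm_ss' val_ss'; apply/rowP => i; rewrite ord1 polyvec_class_col.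
rewrite !big_cons big_nil (mem_mono_perm _ perm_ss') val_ss'.
by rewrite addr0 mulN1r mul1r subrr mxE.
Qed.

Lemma gens_class_col k tau : (size (rleaves tau) < k.-1)%N ->
  {in flatten [seq gens_of K n f.1 f.2 | f <- idents k],
    forall g, g *m class_col tau = 0}.
Proof.
move=> tau_small g /flatten_mapP [[f r] f_id].
move=> /mem_flatten_map_ex [p] /mem_flatten_map_ex [c0] /mem_flatten_map_ex [sz].
move=> /mem_flatten_map_ex [u] /mem_map_ex [ms ->].
move: f_id; rewrite !inE => /or3P [] /eqP [-> _].
- apply: polyvec_sub_class_col; last by rewrite !bval_plug /= bmulAC.
  by apply: perm_leaves_plug; rewrite /= -!catA perm_cat2l perm_catC.
- apply: polyvec_sub_class_col; last by rewrite !bval_plug /= bmulCA.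
  by apply: perm_leaves_plug; rewrite /= !catA perm_cat2r perm_catC.
- apply/rowP => i; rewrite ord1 polyvec_class_col big_cons big_nil mxE.
  suff /negPf -> : bval (plug u (subst ms (left_normed k))) != tau.
    by rewrite andbF mulr0 addr0.
  apply: contraTneq tau_small => <-; rewrite -leqNgt; exact: size_rleaves_left_normed.
Qed.

Lemma binomial_le_codim k :
  (3 <= k)%N -> (k - 1 <= n)%N -> ('C(n, k - 2) <= codim K k n)%N.
Proof.
move=> k_ge3 n_ge.
pose S := [set A : {set 'I_n} | #|A| == k - 2]%N.
have card_S : #|S| = 'C(n, k - 2) by rewrite card_draws card_ord.
have S_bounds (i : 'I_#|S|) : (0 < #|enum_val i| < n)%N.
  by have := enum_valP i; rewrite inE => /eqP ->; lia.
pose x (j : 'I_#|S|) := vecM K n (set_tree (enum_val j)).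
pose c (i : 'I_#|S|) := class_col (bval (set_tree (enum_val i))).
suff dim_le : (\dim (TV K k n) + #|S| <= size (mono n))%N.
  by rewrite /codim -card_S; lia.
apply: (dim_span_add_biorthogonal_le (x := x) (c := c)).
- move=> i; apply: gens_class_col.
  have [_ /perm_size ->] := set_tree_spec (S_bounds i).
  by rewrite size_seq_of_set; have := enum_valP i; rewrite inE => /eqP ->; lia.
- move=> i j; rewrite [LHS]mx11_scalar vecM_class_col (set_tree_spec (S_bounds j)).1 /=.
  congr ((nat_of_bool _)%:R%:M); apply/eqP/eqP => [eq_val | ->] //.
  exact/esym/enum_val_inj/(bval_set_tree_inj (S_bounds j) (S_bounds i)).
Qed.

End ClassFunctional.

Lemma hook_prod_two_rows a b : b <= a -> a`! * b`! <= hook_prod [:: a; b].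
Proof.
move=> le_ba; rewrite /hook_prod !big_ord_recl big_ord0 muln1 -!ffactnn !ffact_prod.
apply: leq_mul; apply: leq_prod => j _ /=.
  by rewrite ltn_ord; case: (j < b) => /=; lia.
by rewrite ltn_ord (leq_trans (ltn_ord j) le_ba) /bump /=; lia.
Qed.

Lemma dim_irr_two_rows_le a b : b <= a -> dim_irr [:: a; b] <= 'C(a + b, b).
Proof.
move=> le_ba; have facts_gt0 : 0 < b`! * a`! by rewrite muln_gt0 !fact_gt0.
have := bin_fact (leq_addl a b); rewrite addnK => fact_eq.
rewrite /dim_irr /= addn0 -(mulnK 'C(a + b, b) facts_gt0) fact_eq.
by apply: leq_div2l => //; rewrite mulnC hook_prod_two_rows.
Qed.

Lemma expn_le_ffact m n : 2 * m <= n -> n ^ m <= 2 ^ m * n ^_ m.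
Proof.
move=> le_2m_n.
have prod_const c : c ^ m = \prod_(i < m) c.
  by rewrite -(big_mkord xpredT (fun=> c)) prod_nat_const_nat subn0.
rewrite ffact_prod !prod_const -big_split; apply: leq_prod => i _ /=.
by have := ltn_ord i; lia.
Qed.

Theorem mainTheorem3 (K : fieldType) (k : nat) :
  ([pchar K] =i pred0)%R -> 3 <= k ->
  (forall n : nat, 2 * k - 4 <= n ->
     dim_irr [:: n + 2 - k; k - 2] <= codim K k n)
  /\ (exists C N : nat, 0 < C /\
        forall n : nat, N <= n -> n ^ (k - 2) <= C * codim K k n).
Proof.
move=> _ k_ge3; split => [n n_ge|].
  have rows_sorted : k - 2 <= n + 2 - k by lia.
  apply: leq_trans (dim_irr_two_rows_le rows_sorted) _.
  have -> : n + 2 - k + (k - 2) = n by lia.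
  by apply: binomial_le_codim => //; lia.
exists (2 ^ (k - 2) * (k - 2)`!), (2 * (k - 2)); split => [|n n_ge].
  by rewrite muln_gt0 expn_gt0 fact_gt0.
apply: leq_trans (expn_le_ffact n_ge) _.
rewrite -bin_ffact -mulnA leq_mul2l mulnC leq_mul2l binomial_le_codim ?orbT //; lia.
Qed.
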